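(* Let $b\ge3$, $1\le j\le b-1$, $0<\epsilon\le\frac1{j+1}$. Let $p,q$ be probability vectors in $\mathbb R^b$ with $p_1\ge1-\epsilon$ and $q_1\le q_2\le\dots\le q_b$. Then $$\Psi_j(p_1,\dots,p_b;\,q_1,q_2,\dots,q_b)\le\Psi_j(p_1,\dots,p_b;\,0,q_1+q_2,q_3,\dots,q_b).$$
   Context: For an integer $1\le j\le b-1$ and vectors $p,q\in\mathbb R^b$, $$\Psi_j(p;q)=\frac{1}{(b-j-1)!}\sum_{\sigma\in S_b}\Big(p_{\sigma(1)}\cdots p_{\sigma(j)}\,q_{\sigma(j+1)}+q_{\sigma(1)}\cdots q_{\sigma(j)}\,p_{\sigma(j+1)}\Big),$$ where $S_b$ is the set of permutations of $\{1,\dots,b\}$; the first $b$ arguments form $p$ and the last $b$ form $q$. *)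

From mathcomp Require Import all_boot all_order all_algebra all_fingroup.
Set Implicit Arguments. Unset Strict Implicit. Unset Printing Implicit Defensive.
Import Order.TTheory GRing.Theory Num.Theory.
Local Open Scope ring_scope.

(* Indices are 0-based: coordinate k (1-based) of the paper is ordinal k-1.
   sigma(1..j) becomes s 0..s (j-1) and sigma(j+1) becomes s j; the factor
   "\sum_(i | val i == j) x (s i)" is exactly x (s j) when j < b. *)
Definition Psi (R : realFieldType) (b j : nat) (p q : 'I_b -> R) : R :=
  ((b - j - 1)`!%:R)^-1 *
  \sum_(s : 'S_b)
     ((\prod_(i < b | (val i < j)%N) p (s i)) * (\sum_(i < b | val i == j) q (s i))
    + (\prod_(i < b | (val i < j)%N) q (s i)) * (\sum_(i < b | val i == j) p (s i))).

Definition prob_vec (R : realFieldType) (b : nat) (p : 'I_b -> R) : Prop :=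
  (forall i, 0 <= p i) /\ \sum_(i < b) p i = 1.

Definition merge12 (R : realFieldType) (n : nat) (q : 'I_n.+2 -> R) : 'I_n.+2 -> R :=
  fun i => if val i == 0%N then 0
           else if val i == 1%N then q ord0 + q (inord 1) else q i.

From mathcomp Require Import all_boot all_order all_algebra all_fingroup.
From mathcomp Require Import ring lra.
Set Implicit Arguments. Unset Strict Implicit. Unset Printing Implicit Defensive.
Import Order.TTheory GRing.Theory Num.Theory.
Local Open Scope ring_scope.

(* Index both the block positions sigma(1..j) and the values by a finite type
   T: for a permutation s, [blockprod x s] is the product of x over the values
   s takes on a set A of positions, and c is the extra position outside A.
   Then Psi_j(p; q) is, up to a positive factor, the sum over s of
     blockprod p s * q (s c) + blockprod q s * p (s c).
   Merging q_1 into q_2 is the map [transfer] moving the mass of a value a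
   onto a value b.  Both halves of the sum increase under it:
   - first half: pairing s with s * (a b), each pair gains
     q_a * (blockprod p (s * (a b)) - blockprod p s) >= 0, since p_b <= p_a;
   - second half: the net change equals a gain over the s with s c = b and a
     in the block (weight p_a - p_b) minus a loss over the s with both a and b
     in the block.  Swapping the positions of b and c maps the loss terms
     injectively to gain terms, using that q_b is minimal among values other
     than a and that the remaining block weights sum to at most
     1 - p_a - p_b.  Hence the change is at least the gain weighted by
     2 p_a - 1 >= 0. *)

Section MassTransfer.

Variables (R : realFieldType) (T : finType).
Variable A : pred T.
Variable c : T.
Hypothesis cNA : ~~ A c.
Variables a b : T.
Hypothesis ba : b != a.

Definition blockprod (x : T -> R) (s : {perm T}) : R := \prod_(i | A i) x (s i).

Definition transfer (q : T -> R) (y : T) : R :=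
  if y == a then 0 else if y == b then q a + q b else q y.

Definition taken (s : {perm T}) (y : T) : bool := A ((s^-1)%g y).

Local Notation t := (tperm a b).

Lemma transfer_a q : transfer q a = 0.
Proof. by rewrite /transfer eqxx. Qed.

Lemma transfer_b q : transfer q b = q a + q b.
Proof. by rewrite /transfer (negbTE ba) eqxx. Qed.

Lemma transfer_other q y : y != a -> y != b -> transfer q y = q y.
Proof. by move=> ya yb; rewrite /transfer (negbTE ya) (negbTE yb). Qed.

Lemma block_free s i y : A i -> ~~ taken s y -> s i != y.
Proof. by move=> Ai; apply: contraNneq => <-; rewrite /taken permK. Qed.

Lemma taken_c s : ~~ taken s (s c).
Proof. by rewrite /taken permK. Qed.

Lemma takenMt s y : taken (s * t)%g y = taken s (t y).
Proof. by rewrite /taken invgM permM tpermV. Qed.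

Lemma blockprod_ge0 x s : (forall y, 0 <= x y) -> 0 <= blockprod x s.
Proof. by move=> x0; apply: prodr_ge0. Qed.

Lemma blockprod_relabel_le x s : (forall y, 0 <= x y) -> x b <= x a ->
  ~~ taken s a -> blockprod x s <= blockprod x (s * t)%g.
Proof.
move=> x0 xba sa; apply: ler_prod => i Ai; rewrite x0 permM /=.
have sia := block_free Ai sa.
by case: (eqVneq (s i) b) => [->|sib]; rewrite ?tpermR // tpermD // eq_sym.
Qed.

Lemma sum_perm_pairs_ge0 (u : {perm T}) (F : {perm T} -> R) :
  (forall s, 0 <= F s + F (s * u)%g) -> 0 <= \sum_s F s.
Proof.
move=> Fu; have E : \sum_s F s = \sum_s F (s * u)%g := reindex_inj (mulIg u).
have : 0 <= \sum_s (F s + F (s * u)%g) by apply: sumr_ge0.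
by rewrite big_split /= -E; lra.
Qed.

(* First half of Psi: the pair {s, s * (a b)} with s c = a gains
   q_a * (blockprod p (s * (a b)) - blockprod p s) >= 0. *)
Lemma first_sum_le p q : (forall y, 0 <= p y) -> (forall y, 0 <= q y) ->
  p b <= p a ->
  \sum_s blockprod p s * q (s c) <= \sum_s blockprod p s * transfer q (s c).
Proof.
move=> p0 q0 pba; rewrite -subr_ge0 -sumrB.
under eq_bigr do rewrite -mulrBr.
apply: (sum_perm_pairs_ge0 (u := t)) => s /=; rewrite permM.
have Ps := blockprod_ge0 s p0; have Pst := blockprod_ge0 (s * t)%g p0.
have qa := q0 a.
have [sca|sca] := eqVneq (s c) a.
  have sa : ~~ taken s a by rewrite -sca taken_c.
  have := blockprod_relabel_le p0 pba sa.
  rewrite sca tpermL transfer_a transfer_b; nra.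
have [scb|scb] := eqVneq (s c) b.
  have sta : ~~ taken (s * t)%g a by rewrite takenMt tpermL -scb taken_c.
  have := blockprod_relabel_le p0 pba sta.
  rewrite -mulgA tperm2 mulg1 scb tpermR transfer_a transfer_b; nra.
by rewrite tpermD 1?eq_sym // !transfer_other // !subrr !mulr0 addr0.
Qed.

Lemma blockprod_transfer_taken q s : taken s a -> blockprod (transfer q) s = 0.
Proof.
by move=> sa; rewrite /blockprod (bigD1 ((s^-1)%g a)) //= permKV transfer_a mul0r.
Qed.

Lemma blockprod_transfer_free q s : ~~ taken s a -> ~~ taken s b ->
  blockprod (transfer q) s = blockprod q s.
Proof. by move=> sa sb; apply: eq_bigr => i Ai; rewrite transfer_other ?block_free. Qed.

Lemma blockprod_transfer_split q s : ~~ taken s a -> taken s b ->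
  blockprod (transfer q) s = blockprod q s + blockprod q (s * t)%g.
Proof.
move=> sa sb; rewrite /blockprod !(bigD1 ((s^-1)%g b) sb) /= permM !permKV.
rewrite transfer_b tpermR.
have other i : A i && (i != (s^-1)%g b) -> s i != a /\ s i != b.
  case/andP=> Ai ib; split; first exact: block_free.
  by apply: contraNneq ib => <-; rewrite permK.
set rest := \prod_(i | A i && (i != (s^-1)%g b)) q (s i).
have -> : \prod_(i | A i && (i != (s^-1)%g b)) transfer q (s i) = rest.
  by apply: eq_bigr => i /other[sia sib]; rewrite transfer_other.
have -> : \prod_(i | A i && (i != (s^-1)%g b)) q ((s * t)%g i) = rest.
  by apply: eq_bigr => i /other[sia sib]; rewrite permM tpermD // eq_sym.
ring.
Qed.

Definition gain_term (w : R) (q : T -> R) (s : {perm T}) : R :=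
  if (s c == b) && taken s a then blockprod q s * w else 0.

Definition loss_term (p q : T -> R) (s : {perm T}) : R :=
  if taken s a && taken s b then blockprod q s * p (s c) else 0.

(* Second half of Psi: the net change is the gain with weight p_a - p_b minus
   the loss.  The terms with a taken and b free are matched, via
   s |-> s * (a b), with those of the split case. *)
Lemma second_gain_minus_loss (p q : T -> R) :
  \sum_(s : {perm T}) blockprod (transfer q) s * p (s c)
  - \sum_(s : {perm T}) blockprod q s * p (s c) =
  \sum_(s : {perm T}) gain_term (p a - p b) q s - \sum_(s : {perm T}) loss_term p q s.
Proof.
pose split_term (s : {perm T}) :=
  if ~~ taken s a && taken s b then blockprod q (s * t)%g * p (s c) else 0.
pose free_b_term (s : {perm T}) :=
  if taken s a && ~~ taken s b then blockprod q s * p ((s * t)%g c) else 0.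
pose taken_a_term (s : {perm T}) :=
  if taken s a then blockprod q s * p (s c) else 0.
have match_split : \sum_s split_term s = \sum_s free_b_term s.
  rewrite (reindex_inj (mulIg t)) /=; apply: eq_bigr => s _.
  rewrite /split_term /free_b_term.
  by rewrite !takenMt tpermL tpermR -mulgA tperm2 mulg1 andbC.
have change s : blockprod (transfer q) s * p (s c) - blockprod q s * p (s c) =
    split_term s - taken_a_term s.
  rewrite /split_term /taken_a_term.
  case: (boolP (taken s a)) => sa; case: (boolP (taken s b)) => sb /=.
  - by rewrite blockprod_transfer_taken //; ring.
  - by rewrite blockprod_transfer_taken //; ring.
  - by rewrite blockprod_transfer_split //; ring.
  - by rewrite blockprod_transfer_free //; ring.
have regroup s : free_b_term s - taken_a_term s =
    gain_term (p a - p b) q s - loss_term p q s.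
  rewrite /free_b_term /taken_a_term /gain_term /loss_term permM.
  case: (boolP (taken s a)) => sa; last by rewrite !andbF.
  case: (eqVneq (s c) b) => [scb|scb].
    have sb : ~~ taken s b by rewrite -scb taken_c.
    by rewrite (negbTE sb) scb tpermR /=; ring.
  have sca : s c != a by apply: contraNneq (taken_c s) => ->.
  by rewrite tpermD 1?eq_sym //; case: (taken s b) => /=; ring.
rewrite -sumrB (eq_bigr _ (fun s _ => change s)) sumrB match_split -sumrB.
by rewrite (eq_bigr _ (fun s _ => regroup s)) sumrB.
Qed.

Lemma sum_block_hit (F : R) (s : {perm T}) y :
  \sum_(k | A k) (if s k == y then F else 0) = if taken s y then F else 0.
Proof.
rewrite -big_mkcondr (eq_bigl (fun k => A k && (k == (s^-1)%g y))) => [|k].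
  by rewrite big_mkcondl big_pred1_eq.
by rewrite (canF_eq (permK s)).
Qed.

Lemma blockprod_swap_positions_le (q : T -> R) (s : {perm T}) k :
  (forall y, 0 <= q y) -> (forall y, y != a -> q b <= q y) ->
  A k -> s c = b -> s k != a ->
  blockprod q (tperm k c * s)%g <= blockprod q s.
Proof.
move=> q0 qmin Ak scb ska; apply: ler_prod => i Ai; rewrite q0 permM /=.
have [->|ik] := eqVneq i k; first by rewrite tpermL scb qmin.
have ic : i != c by apply: contraNneq cNA => <-.
by rewrite tpermD // eq_sym.
Qed.

Lemma taken_swap_positions (s : {perm T}) k :
  A k -> s c = b -> taken (tperm k c * s)%g a ->
  (s k != a) && taken s a.
Proof.
move=> Ak scb; rewrite /taken invgM permM tpermV.
have [ska|ska] := eqVneq (s k) a.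
  by rewrite -ska permK tpermL (negbTE cNA).
have ac : (s^-1)%g a != c by apply: contraNneq ba => ac; rewrite -scb -ac permKV.
have ak : (s^-1)%g a != k by apply: contraNneq ska => <-; rewrite permKV.
by rewrite tpermD // eq_sym.
Qed.

Lemma block_weights_le (p : T -> R) (s : {perm T}) : (forall y, 0 <= p y) ->
  \sum_y p y = 1 -> s c = b ->
  \sum_(k | A k && (s k != a)) p (s k) <= 1 - p a - p b.
Proof.
move=> p0 p1 scb.
have E : \sum_i p (s i) = 1 by rewrite -p1 [RHS](reindex_inj (@perm_inj _ s)).
rewrite (bigID (fun k => A k && (s k != a))) /= in E.
rewrite [X in _ + X = _](bigD1 c) /= in E; last by rewrite (negbTE cNA).
rewrite [X in _ + (_ + X) = _](bigD1 ((s^-1)%g a)) /= in E; last first.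
  rewrite permKV eqxx andbF /=.
  by apply: contraNneq ba => ac; rewrite -scb -ac permKV.
rewrite permKV scb in E.
have : 0 <= \sum_(i | ~~ (A i && (s i != a)) && (i != c) && (i != (s^-1)%g a)) p (s i).
  by apply: sumr_ge0.
lra.
Qed.

(* The loss is dominated by the gain with weight 1 - p_a - p_b: each loss
   term, with b at block position k, is moved by exchanging k and c to a
   permutation sending c to b. *)
Lemma second_loss_le (p q : T -> R) : (forall y, 0 <= p y) -> \sum_y p y = 1 ->
  (forall y, 0 <= q y) -> (forall y, y != a -> q b <= q y) ->
  \sum_(s : {perm T}) loss_term p q s
  <= \sum_(s : {perm T}) gain_term (1 - p a - p b) q s.
Proof.
move=> p0 p1 q0 qmin.
pose taken_a_term (s : {perm T}) :=
  if taken s a then blockprod q s * p (s c) else 0.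
pose moved_term (s : {perm T}) (k : T) :=
  if (s c == b) && taken s a && (s k != a) then blockprod q s * p (s k) else 0.
have moved_term_ge0 (s : {perm T}) (k : T) : 0 <= moved_term s k.
  rewrite /moved_term; case: ifP => // _.
  by apply: mulr_ge0; [apply: blockprod_ge0|].
have -> : \sum_(s : {perm T}) loss_term p q s
    = \sum_(k | A k) \sum_(s : {perm T}) (if s k == b then taken_a_term s else 0).
  rewrite exchange_big; apply: eq_bigr => s _ /=.
  rewrite sum_block_hit /loss_term /taken_a_term.
  by case: (taken s a); case: (taken s b).
have move_to_c (k : T) : A k ->
    \sum_(s : {perm T}) (if s k == b then taken_a_term s else 0)
    <= \sum_(s : {perm T}) moved_term s k.
  move=> Ak; rewrite (reindex_inj (mulgI (tperm k c))) /=.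
  apply: ler_sum => s _; rewrite /taken_a_term !permM tpermL tpermR.
  have [scb|] := eqVneq (s c) b; last by [].
  case: (boolP (taken _ a)) => [taken_kc|_]; last exact: moved_term_ge0.
  have /andP[ska sa] := taken_swap_positions Ak scb taken_kc.
  rewrite /moved_term scb eqxx sa ska /=; apply: ler_wpM2r => //.
  exact: blockprod_swap_positions_le.
have regroup (s : {perm T}) : \sum_(k | A k) moved_term s k =
    if (s c == b) && taken s a
    then blockprod q s * \sum_(k | A k && (s k != a)) p (s k) else 0.
  rewrite /moved_term; case: ifP => _; last by rewrite big1.
  by rewrite mulr_sumr big_mkcondr.
apply: le_trans (ler_sum _ move_to_c) _.
rewrite exchange_big /=; apply: ler_sum => s _; rewrite regroup /gain_term.
case: ifP => [/andP[/eqP scb _]|_] //.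
by apply: ler_wpM2l; [exact: blockprod_ge0 | exact: block_weights_le].
Qed.

(* Second half of Psi increases since p_a - p_b >= 1 - p_a - p_b. *)
Lemma second_sum_le (p q : T -> R) : (forall y, 0 <= p y) -> \sum_y p y = 1 ->
  1 <= 2 * p a -> (forall y, 0 <= q y) -> (forall y, y != a -> q b <= q y) ->
  \sum_(s : {perm T}) blockprod q s * p (s c)
  <= \sum_(s : {perm T}) blockprod (transfer q) s * p (s c).
Proof.
move=> p0 p1 pa q0 qmin; rewrite -subr_ge0 second_gain_minus_loss.
apply: le_trans (lerB (lexx _) (second_loss_le p0 p1 q0 qmin)); rewrite -sumrB.
apply: sumr_ge0 => s _; rewrite /gain_term; case: ifP => _; last by rewrite subrr.
by rewrite -mulrBr; apply: mulr_ge0; [apply: blockprod_ge0 | lra].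
Qed.

Lemma weights_pair_le (p : T -> R) : (forall y, 0 <= p y) -> \sum_y p y = 1 ->
  p a + p b <= 1.
Proof.
move=> p0 <-; rewrite (bigD1 a) //= (bigD1 b) //= addrA lerDl.
by apply: sumr_ge0.
Qed.

Lemma transfer_increases (p q : T -> R) : (forall y, 0 <= p y) -> \sum_y p y = 1 ->
  1 <= 2 * p a -> (forall y, 0 <= q y) -> (forall y, y != a -> q b <= q y) ->
  \sum_(s : {perm T}) (blockprod p s * q (s c) + blockprod q s * p (s c))
  <= \sum_(s : {perm T}) (blockprod p s * transfer q (s c)
                          + blockprod (transfer q) s * p (s c)).
Proof.
move=> p0 p1 pa q0 qmin; rewrite !big_split /=; apply: lerD.
  by apply: first_sum_le => //; have := weights_pair_le p0 p1; lra.
exact: second_sum_le.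
Qed.

End MassTransfer.

Definition first_block (m j : nat) : pred 'I_m := fun i => (val i < j)%N.

Lemma Psi_blockprod (R : realFieldType) (m j : nat) (hj : (j < m)%N)
    (x y : 'I_m -> R) :
  Psi j x y = ((m - j - 1)`!%:R)^-1 *
    \sum_(s : 'S_m) (blockprod (first_block j) x s * y (s (Ordinal hj))
                     + blockprod (first_block j) y s * x (s (Ordinal hj))).
Proof.
rewrite /Psi; congr (_ * _); apply: eq_bigr => s _.
have single (z : 'I_m -> R) : \sum_(i < m | val i == j) z (s i) = z (s (Ordinal hj)).
  by apply: big_pred1 => i /=; rewrite -val_eqE.
by rewrite !single.
Qed.

Lemma Psi_eq (R : realFieldType) (m j : nat) (x y y' : 'I_m -> R) :
  y =1 y' -> Psi j x y = Psi j x y'.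
Proof.
move=> yy'; rewrite /Psi; congr (_ * _); apply: eq_bigr => s _.
by congr (_ * _ + _ * _); apply: eq_bigr => i _; rewrite yy'.
Qed.

Lemma merge12_transfer (R : realFieldType) (n : nat) (q : 'I_n.+2 -> R) :
  merge12 q =1 transfer ord0 (inord 1) q.
Proof.
move=> i; rewrite /merge12 /transfer.
have -> : (i == ord0) = (val i == 0%N) by rewrite -val_eqE.
by have -> : (i == inord 1) = (val i == 1%N) by rewrite -val_eqE /= inordK.
Qed.

Theorem mainTheorem9 (R : realFieldType) (n j : nat) (eps : R)
  (p q : 'I_n.+3 -> R) :
  (1 <= j)%N -> (j <= n.+3 - 1)%N ->
  0 < eps -> eps <= (j.+1%:R)^-1 ->
  prob_vec p -> prob_vec q ->
  1 - eps <= p ord0 ->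
  (forall i k : 'I_n.+3, (i <= k)%N -> q i <= q k) ->
  Psi j p q <= Psi j p (merge12 q).
Proof.
move=> j1 jb eps0 epsj [p0 p1] [q0 _] peps qmono.
have hj : (j < n.+3)%N by move: jb; rewrite subn1.
have eps_half : 2 * eps <= 1.
  have : eps * j.+1%:R <= 1 by rewrite -ler_pdivlMr ?ltr0Sn // div1r.
  have : 2 <= j.+1%:R :> R by rewrite ler_nat ltnS.
  nra.
rewrite (Psi_eq j p (merge12_transfer q)) !(Psi_blockprod hj p).
apply: ler_wpM2l; first by rewrite invr_ge0 ler0n.
apply: transfer_increases => //; first by rewrite /first_block ltnn.
- by rewrite -val_eqE /= inordK.
- lra.
- move=> y y0; apply: qmono; rewrite inordK // lt0n.
  by rewrite -val_eqE in y0.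
Qed.
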